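(* Let $(\Delta x,\Delta y)\in\mathbb{R}^2$, $(o_x,o_y)\in\mathbb{R}^2$, $(x_0,y_0,\theta_0)\in\mathbb{R}^3$, $R>0$ and $t_{\max}>0$. Consider the forward right-turning arc robot path $$x(t)=x_0+R\sin\theta_0-R\sin(\theta_0-t),\quad y(t)=y_0-R\cos\theta_0+R\cos(\theta_0-t),\quad \theta(t)=\theta_0-t,\qquad t\in(0,t_{\max}),$$ (an arc of radius $R$ with centre angle $t_{\max}$), and let the anchoring point have world coordinates $\tilde x(t)=x(t)+\cos\theta(t)\Delta x-\sin\theta(t)\Delta y$, $\tilde y(t)=y(t)+\sin\theta(t)\Delta x+\cos\theta(t)\Delta y$, assumed different from $(o_x,o_y)$ for all $t$. Define $$A=o_x-x_0-R\sin\theta_0,\quad B=o_y-y_0+R\cos\theta_0,\quad C=A\Delta x+BR+B\Delta y,\quad D=AR+A\Delta y-B\Delta x,$$ assume $(C,D)\neq(0,0)$, and let $\varphi$ be the angle with $\cos\varphi=\frac{C}{\sqrt{C^2+D^2}}$, $\sin\varphi=\frac{D}{\sqrt{C^2+D^2}}$. If either $$\frac{A^2+B^2}{\sqrt{C^2+D^2}}>\cos(t-\theta_0-\varphi)\ \text{ for all } t\in(0,t_{\max}),$$ or $$\frac{A^2+B^2}{\sqrt{C^2+D^2}}<\cos(t-\theta_0-\varphi)\ \text{ for all } t\in(0,t_{\max}),$$ then the relative angle function $\Phi(t)=\arctan\left(\frac{o_y-\tilde y(t)}{o_x-\tilde x(t)}\right)-\theta(t)$ is monotonic on $(0,t_{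\max})$.
   Context: $(\Delta x,\Delta y)$ is the position of the tether–robot anchoring point $s$ in the robot's egocentric frame, and $(o_x,o_y)$ is the (fixed) position of the last tether–obstacle contact point $o$ in the world frame. In $\Phi$, $\arctan\left(\frac{o_y-\tilde y}{o_x-\tilde x}\right)$ denotes the direction angle of the vector from $(\tilde x,\tilde y)$ to $(o_x,o_y)$, taken as a continuous (differentiable) branch along the path. *)

From Stdlib Require Import Reals.
Open Scope R_scope.

Definition path_x (x0 th0 Rr t : R) : R := x0 + Rr * sin th0 - Rr * sin (th0 - t).
Definition path_y (y0 th0 Rr t : R) : R := y0 - Rr * cos th0 + Rr * cos (th0 - t).
Definition path_th (th0 t : R) : R := th0 - t.

Definition anchor_x (x0 th0 Rr dx dy t : R) : R :=
  path_x x0 th0 Rr t + cos (path_th th0 t) * dx - sin (path_th th0 t) * dy.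
Definition anchor_y (y0 th0 Rr dx dy t : R) : R :=
  path_y y0 th0 Rr t + sin (path_th th0 t) * dx + cos (path_th th0 t) * dy.

Definition angle_branch (vx vy alpha : R -> R) (a b : R) : Prop :=
  forall t, a < t < b ->
    continuity_pt alpha t /\
    cos (alpha t) = vx t / sqrt (vx t ^ 2 + vy t ^ 2) /\
    sin (alpha t) = vy t / sqrt (vx t ^ 2 + vy t ^ 2).

Definition monotonic_on (f : R -> R) (a b : R) : Prop :=
  (forall s t, a < s -> s <= t -> t < b -> f s <= f t) \/
  (forall s t, a < s -> s <= t -> t < b -> f t <= f s).

(** Phi = alpha - theta0 + t, where alpha is the direction angle of v = o - s.  The anchor s
    turns clockwise at unit speed about the arc centre c, so v' is v - (o - c) rotated by
    -pi/2, and the derivative (v x v') / |v|^2 of the angle gives Phi' = <o - c, v> / |v|^2.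
    Since o - c = (A, B), expanding gives
    <o - c, v> = A^2 + B^2 - sqrt(C^2 + D^2) cos(t - theta0 - phi), so either
    hypothesis fixes the sign of Phi' on the whole interval. *)

From Coquelicot Require Import Coquelicot.
From Stdlib Require Import Reals Lra.
Open Scope R_scope.

Lemma monotonic_on_derive_sign (f df : R -> R) (a b : R) :
  (forall t, a < t < b -> is_derive f t (df t)) ->
  (forall t, a < t < b -> 0 < df t) \/ (forall t, a < t < b -> df t < 0) ->
  monotonic_on f a b.
Proof.
  intros Hf [Hpos | Hneg]; [left | right]; intros s t Hs [Hst | <-] Ht; try lra.
  - apply Rlt_le, (incr_function f a b df); simpl; try lra.
    + intros x Hax Hxb; apply Hf; lra.
    + intros x Hax Hxb; apply Hpos; lra.
  - cut (- f s < - f t); [lra |].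
    apply (incr_function (fun x => - f x) a b (fun x => - df x)); simpl; try lra.
    + intros x Hax Hxb; apply (is_derive_opp f), Hf; lra.
    + intros x Hax Hxb; specialize (Hneg x (conj Hax Hxb)); lra.
Qed.

Lemma is_derive_eq_deriv (f : R -> R) (x l l' : R) :
  is_derive f x l -> l = l' -> is_derive f x l'.
Proof. intros H <-; exact H. Qed.

Lemma Rdiv_simpl_common (x y k : R) : k <> 0 -> (x / k) / (y / k) = x / y.
Proof.
  intro Hk; unfold Rdiv; rewrite Rinv_mult, Rinv_inv.
  replace (x * / k * (/ y * k)) with (x * / y * (k * / k)) by ring.
  rewrite Rinv_r by exact Hk; ring.
Qed.

Lemma Rminus_eq_atan (u w : R) :
  Rabs (u - w) < PI / 2 ->
  u - w = atan ((sin u * cos w - cos u * sin w) / (cos u * cos w + sin u * sin w)).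
Proof.
  intro Hlt; apply Rabs_def2 in Hlt.
  rewrite <- sin_minus, <- cos_minus; fold (tan (u - w)).
  symmetry; apply atan_tan; lra.
Qed.

Lemma amplitude_phase (C D phi u : R) :
  0 < sqrt (C ^ 2 + D ^ 2) ->
  cos phi = C / sqrt (C ^ 2 + D ^ 2) ->
  sin phi = D / sqrt (C ^ 2 + D ^ 2) ->
  C * cos u - D * sin u = sqrt (C ^ 2 + D ^ 2) * cos (u + phi).
Proof.
  intros HS Hc Hs; rewrite cos_plus, Hc, Hs; field; lra.
Qed.

Section AngleBranch.

Variables (vx vy alpha : R -> R) (a b : R).
Hypothesis Hbranch : angle_branch vx vy alpha a b.

Lemma angle_branch_norm_pos (t : R) : a < t < b -> 0 < vx t ^ 2 + vy t ^ 2.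
Proof.
  intro Ht; destruct (Hbranch t Ht) as (_ & Hc & Hs).
  destruct (Rlt_or_le 0 (vx t ^ 2 + vy t ^ 2)) as [Hn | Hn]; [exact Hn | exfalso].
  assert (Hx : vx t = 0) by nra; assert (Hy : vy t = 0) by nra.
  rewrite Hx, Hy in Hc, Hs; unfold Rdiv in Hc, Hs; rewrite Rmult_0_l in Hc, Hs.
  generalize (sin2_cos2 (alpha t)); unfold Rsqr; rewrite Hc, Hs; lra.
Qed.

Definition turn_tan (t s : R) : R :=
  (vx t * vy s - vy t * vx s) / (vx t * vx s + vy t * vy s).

Lemma turn_tan_eq (t s : R) :
  a < t < b -> a < s < b ->
  turn_tan t s = (sin (alpha s) * cos (alpha t) - cos (alpha s) * sin (alpha t))
                 / (cos (alpha s) * cos (alpha t) + sin (alpha s) * sin (alpha t)).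
Proof.
  intros Ht Hs.
  destruct (Hbranch t Ht) as (_ & -> & ->); destruct (Hbranch s Hs) as (_ & -> & ->).
  assert (Hnt := sqrt_lt_R0 _ (angle_branch_norm_pos t Ht)).
  assert (Hns := sqrt_lt_R0 _ (angle_branch_norm_pos s Hs)).
  set (nt := sqrt (vx t ^ 2 + vy t ^ 2)) in *; set (ns := sqrt (vx s ^ 2 + vy s ^ 2)) in *.
  unfold turn_tan; rewrite <- (Rdiv_simpl_common (vx t * vy s - vy t * vx s) _ (ns * nt)) by nra.
  f_equal; field; lra.
Qed.

(* Continuity keeps alpha within pi/2 of alpha t, where atan inverts tan. *)
Lemma angle_branch_near_atan (t : R) :
  a < t < b -> locally t (fun s => alpha s = alpha t + atan (turn_tan t s)).
Proof.
  intro Ht.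
  assert (Hclose : locally t (fun s => Rabs (alpha s - alpha t) < PI / 2)).
  { apply (proj1 (continuity_pt_filterlim _ _) (proj1 (Hbranch t Ht))
             (fun y => Rabs (y - alpha t) < PI / 2)).
    exact (locally_ball (alpha t) (mkposreal _ PI2_RGT_0)). }
  assert (Hin : locally t (fun s => a < s < b)).
  { apply (locally_interval _ t a b); simpl; tauto. }
  generalize (filter_and _ _ Hclose Hin); apply filter_imp.
  intros s [Hst Hs].
  rewrite (turn_tan_eq t s Ht Hs), <- Rminus_eq_atan by exact Hst; ring.
Qed.

Lemma is_derive_turn_tan (t dvx dvy : R) :
  a < t < b -> is_derive vx t dvx -> is_derive vy t dvy ->
  is_derive (turn_tan t) t ((vx t * dvy - vy t * dvx) / (vx t ^ 2 + vy t ^ 2)).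
Proof.
  intros Ht Dx Dy; assert (Hn := angle_branch_norm_pos t Ht).
  assert (Dcross : is_derive (fun s => vx t * vy s - vy t * vx s) t (vx t * dvy - vy t * dvx)).
  { apply (is_derive_minus (fun s => vx t * vy s) (fun s => vy t * vx s));
      apply is_derive_scal; assumption. }
  assert (Ddot : is_derive (fun s => vx t * vx s + vy t * vy s) t (vx t * dvx + vy t * dvy)).
  { apply (is_derive_plus (fun s => vx t * vx s) (fun s => vy t * vy s));
      apply is_derive_scal; assumption. }
  apply (is_derive_eq_deriv _ _ _ _ (is_derive_div _ _ t _ _ Dcross Ddot ltac:(nra))).
  field; lra.
Qed.

Lemma angle_branch_is_derive (t dvx dvy : R) :
  a < t < b -> is_derive vx t dvx -> is_derive vy t dvy ->
  is_derive alpha t ((vx t * dvy - vy t * dvx) / (vx t ^ 2 + vy t ^ 2)).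
Proof.
  intros Ht Dx Dy.
  apply (is_derive_ext_loc (fun s => alpha t + atan (turn_tan t s))).
  { apply (filter_imp _ _ (fun s H => eq_sym H)), angle_branch_near_atan, Ht. }
  assert (Dtan := is_derive_turn_tan t dvx dvy Ht Dx Dy).
  assert (Datan := is_derive_comp atan (turn_tan t) t _ _
                     (proj2 (is_derive_Reals _ _ _) (derivable_pt_lim_atan _)) Dtan).
  apply (is_derive_eq_deriv _ _ _ _ (is_derive_plus _ _ t _ _ (is_derive_const (alpha t) t) Datan)).
  assert (Hzero : turn_tan t t = 0).
  { unfold turn_tan; replace (vx t * vy t - vy t * vx t) with 0 by ring; apply Rdiv_0_l. }
  assert (Hn := angle_branch_norm_pos t Ht).
  unfold plus, scal, zero; simpl; unfold mult; simpl; rewrite Hzero; field; nra.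
Qed.

End AngleBranch.

Lemma sum_sq_pos_of_pair_neq (C D : R) : (C, D) <> (0, 0) -> 0 < C ^ 2 + D ^ 2.
Proof.
  intro HCD; destruct (Req_dec C 0) as [-> | HC]; [destruct (Req_dec D 0) as [-> | HD] |].
  - contradiction.
  - nra.
  - nra.
Qed.

Section ArcPath.

Variables (ox oy x0 y0 th0 Rr dx dy : R).

Definition rel_x (t : R) : R := ox - anchor_x x0 th0 Rr dx dy t.
Definition rel_y (t : R) : R := oy - anchor_y y0 th0 Rr dx dy t.

(* A, B, C, D of the paper; (A, B) is the vector from the centre of the arc to o. *)
Definition centre_ox : R := ox - x0 - Rr * sin th0.
Definition centre_oy : R := oy - y0 + Rr * cos th0.

Definition phase_C : R := centre_ox * dx + centre_oy * Rr + centre_oy * dy.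
Definition phase_D : R := centre_ox * Rr + centre_ox * dy - centre_oy * dx.

Lemma is_derive_rel_x (t : R) : is_derive rel_x t (rel_y t - centre_oy).
Proof.
  unfold rel_x, rel_y, centre_oy, anchor_x, anchor_y, path_x, path_y, path_th.
  auto_derive; [exact I | unfold Rminus; ring].
Qed.

Lemma is_derive_rel_y (t : R) : is_derive rel_y t (centre_ox - rel_x t).
Proof.
  unfold rel_x, rel_y, centre_ox, anchor_x, anchor_y, path_x, path_y, path_th.
  auto_derive; [exact I | unfold Rminus; ring].
Qed.

Lemma centre_dot_rel (t : R) :
  centre_ox * rel_x t + centre_oy * rel_y t
  = centre_ox ^ 2 + centre_oy ^ 2 - (phase_C * cos (th0 - t) - phase_D * sin (th0 - t)).
Proof.
  unfold rel_x, rel_y, phase_C, phase_D, centre_ox, centre_oy,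
    anchor_x, anchor_y, path_x, path_y, path_th.
  ring.
Qed.

Lemma relative_angle_is_derive (alpha : R -> R) (a b t : R) :
  angle_branch rel_x rel_y alpha a b -> a < t < b ->
  is_derive (fun s => alpha s - path_th th0 s) t
    ((centre_ox * rel_x t + centre_oy * rel_y t) / (rel_x t ^ 2 + rel_y t ^ 2)).
Proof.
  intros Hbranch Ht.
  assert (Dalpha := angle_branch_is_derive _ _ _ _ _ Hbranch t _ _ Ht
                      (is_derive_rel_x t) (is_derive_rel_y t)).
  assert (Dth : is_derive (path_th th0) t (-1)) by (unfold path_th; auto_derive; [exact I | ring]).
  apply (is_derive_eq_deriv _ _ _ _ (is_derive_minus _ _ t _ _ Dalpha Dth)).
  assert (Hn := angle_branch_norm_pos _ _ _ _ _ Hbranch t Ht).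
  unfold minus, plus, opp; simpl; field; lra.
Qed.

End ArcPath.

Theorem theorem2 (dx dy ox oy x0 y0 th0 Rr tmax : R) (phi : R) (alpha : R -> R) :
  0 < Rr -> 0 < tmax ->
  (forall t, 0 < t < tmax ->
     (anchor_x x0 th0 Rr dx dy t, anchor_y y0 th0 Rr dx dy t) <> (ox, oy)) ->
  let A := ox - x0 - Rr * sin th0 in
  let B := oy - y0 + Rr * cos th0 in
  let C := A * dx + B * Rr + B * dy in
  let D := A * Rr + A * dy - B * dx in
  (C, D) <> (0, 0) ->
  cos phi = C / sqrt (C ^ 2 + D ^ 2) ->
  sin phi = D / sqrt (C ^ 2 + D ^ 2) ->
  ((forall t, 0 < t < tmax ->
      (A ^ 2 + B ^ 2) / sqrt (C ^ 2 + D ^ 2) > cos (t - th0 - phi)) \/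
   (forall t, 0 < t < tmax ->
      (A ^ 2 + B ^ 2) / sqrt (C ^ 2 + D ^ 2) < cos (t - th0 - phi))) ->
  angle_branch (fun t => ox - anchor_x x0 th0 Rr dx dy t)
               (fun t => oy - anchor_y y0 th0 Rr dx dy t) alpha 0 tmax ->
  monotonic_on (fun t => alpha t - path_th th0 t) 0 tmax.
Proof.
  (* The anchor avoiding o already follows from [angle_branch] (angle_branch_norm_pos). *)
  intros _ _ _ A B C D HCD Hcos Hsin Hsign Hbranch.
  assert (HS := sqrt_lt_R0 _ (sum_sq_pos_of_pair_neq C D HCD)).
  set (S := sqrt (C ^ 2 + D ^ 2)) in *.
  assert (Hdot : forall t, centre_ox ox x0 th0 Rr * rel_x ox x0 th0 Rr dx dy t
                           + centre_oy oy y0 th0 Rr * rel_y oy y0 th0 Rr dx dy t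
                         = S * ((A ^ 2 + B ^ 2) / S - cos (t - th0 - phi))).
  { intro t; rewrite centre_dot_rel, (amplitude_phase C D phi _ HS Hcos Hsin).
    replace (th0 - t + phi) with (- (t - th0 - phi)) by ring; rewrite cos_neg.
    fold S; unfold centre_ox, centre_oy; fold A B; field; lra. }
  apply (monotonic_on_derive_sign _ _ 0 tmax
           (fun t => relative_angle_is_derive ox oy x0 y0 th0 Rr dx dy alpha 0 tmax t Hbranch)).
  destruct Hsign as [Hgt | Hlt]; [left | right]; intros t Ht;
    assert (Hn := angle_branch_norm_pos _ _ _ _ _ Hbranch t Ht); rewrite Hdot.
  - exact (Rdiv_lt_0_compat _ _ (Rmult_lt_0_compat _ _ HS (Rgt_minus _ _ (Hgt t Ht))) Hn).
  - exact (Rdiv_neg_pos _ _ (Rmult_pos_neg _ _ HS (Rlt_minus _ _ (Hlt t Ht))) Hn).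
Qed.
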